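(* Let $\mathbb{H}\in\{\mathbb{R},\mathbb{C}\}$, let $A\in\mathbb{H}^{M\times N}$ be a deterministic matrix whose $m$th row is $a_m^H$, let $x\in\mathbb{H}^N$, $e^z\in\mathbb{H}^M$, $e^y\in\mathbb{R}^M$ be random vectors, let $f:\mathbb{H}\to\mathbb{R}$ be a measurable function, and let $y=f(Ax+e^z)+e^y\in\mathbb{R}^M$, with $f$ applied entrywise. Let $\mathcal{T}:\mathbb{R}\to\mathbb{R}$ be a measurable preprocessing function, applied entrywise to vectors, and assume $\mathbb{E}[\mathcal{T}(y_m)^2]<\infty$ for all $m$ and $\mathbb{E}[\|x\|_2^4]<\infty$. Define $\overline{\mathcal{T}}(y)=\mathbb{E}[\mathcal{T}(y)]\in\mathbb{R}^M$, $K_x=\mathbb{E}[xx^H]$, $$T=\mathbb{E}\big[(\mathcal{T}(y)-\overline{\mathcal{T}}(y))(\mathcal{T}(y)-\overline{\mathcal{T}}(y))^T\big]\in\mathbb{R}^{M\times M},$$ and assume $T$ is full rank. Let $t\in\mathbb{R}^M$ be the (random) vector satisfying $Tt=\mathcal{T}(y)-\overline{\mathcal{T}}(y)$, and for $m=1,\dots,M$ let $$V_m=\mathbb{E}\big[(\mathcal{T}(y_m)-\overline{\mathcal{T}}(y_m))(xx^H-K_x)\big]\in\mathbb{H}^{N\times N}.$$ Consider the problem $$\underset{\widetilde W_m\in\mathbb{H}^{N\times N},\ m=0,\dots,M}{\mathrm{minimize}}\ \mathbb{E}\Big[\Big\|\widetilde W_0+\sum_{m=1}^M\mathcal{T}(y_m)\widetilde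 W_m-xx^H\Big\|_F^2\Big].$$ Then the matrix $D_y=\widetilde W_0+\sum_{m=1}^M\mathcal{T}(y_m)\widetilde W_m$ produced by a minimizer of this problem (i.e., the affine-in-$\mathcal{T}(y)$ matrix minimizing the spectral MSE $\mathbb{E}[\|D_y-xx^H\|_F^2]$) is $$D_y=K_x+\sum_{m=1}^M t_mV_m.$$
   Context: Expectations are taken jointly over the random quantities $x$, $e^z$, $e^y$ ($A$ is deterministic). For $\mathbb{H}=\mathbb{R}$, the superscript $H$ denotes transpose. $\|\cdot\|_F$ is the Frobenius norm. The matrix $D_y$ is called the linear spectral estimator (LSPE) matrix, and the linear spectral estimate of $x$ is a (scaled) leading eigenvector of $D_y$, i.e., a minimizer of $\|D_y-\tilde x\tilde x^H\|_F$ over $\tilde x\in\mathbb{H}^N$. *)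

From HB Require Import structures.
From mathcomp Require Import all_boot all_order all_algebra.
From mathcomp Require Import all_classical all_reals all_analysis.
From mathcomp Require Import complex.
Set Implicit Arguments. Unset Strict Implicit. Unset Printing Implicit Defensive.
Import Order.TTheory GRing.Theory Num.Theory.
Local Open Scope ring_scope.
Local Open Scope classical_set_scope.

Inductive fld := FR | FC.

Definition scal (R : realType) (k : fld) : numFieldType :=
  match k with FR => Num.NumField.clone R _ | FC => Num.NumField.clone R[i] _ end.

Definition sre (R : realType) (k : fld) : scal R k -> R :=
  match k as k0 return scal R k0 -> R with
  | FR => fun z => z | FC => fun z => complex.Re z end.
Definition sim (R : realType) (k : fld) : scal R k -> R :=
  match k as k0 return scal R k0 -> R with
  | FR => fun _ => 0 | FC => fun z => complex.Im z end.
Definition sconj (R : realType) (k : fld) : scal R k -> scal R k :=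
  match k as k0 return scal R k0 -> scal R k0 with
  | FR => fun z => z | FC => fun z => conjc z end.
Definition sofR (R : realType) (k : fld) : R -> scal R k :=
  match k as k0 return R -> scal R k0 with
  | FR => fun r => r | FC => fun r => Complex r 0 end.
Definition smk (R : realType) (k : fld) : R -> R -> scal R k :=
  match k as k0 return R -> R -> scal R k0 with
  | FR => fun a _ => a | FC => fun a b => Complex a b end.

Definition sabs2 (R : realType) (k : fld) (z : scal R k) : R :=
  sre z ^+ 2 + sim z ^+ 2.

Definition ctr (R : realType) (k : fld) (p q : nat) (A : 'M[scal R k]_(p, q))
  : 'M[scal R k]_(q, p) := (map_mx (@sconj R k) A)^T.

Definition frob2 (R : realType) (k : fld) (p q : nat) (A : 'M[scal R k]_(p, q)) : R :=
  \sum_(i < p) \sum_(j < q) sabs2 (A i j).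

Definition smeas (R : realType) (k : fld) (d : measure_display) (T : measurableType d)
  (F : T -> scal R k) : Prop :=
  measurable_fun setT (fun w => sre (F w)) /\ measurable_fun setT (fun w => sim (F w)).

Definition smeasf (R : realType) (k : fld) : (scal R k -> R) -> Prop :=
  match k as k0 return (scal R k0 -> R) -> Prop with
  | FR => fun f => measurable_fun [set: R] f
  | FC => fun f => measurable_fun [set: R * R] (fun p : R * R => f (Complex p.1 p.2))
  end.

Definition Ex (R : realType) (d : measure_display) (T : measurableType d)
  (P : probability T R) (g : T -> R) : R :=
  fine (\int[P]_w (g w)%:E).

Definition Emx (R : realType) (k : fld) (d : measure_display) (T : measurableType d)
  (P : probability T R) (p q : nat) (F : T -> 'M[scal R k]_(p, q)) : 'M[scal R k]_(p, q) :=
  \matrix_(i, j) smk k (Ex P (fun w => sre (F w i j))) (Ex P (fun w => sim (F w i j))).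

(* Every real coordinate Z (real or imaginary part of an entry of x x^H) of the
   estimator is an affine function c0 + sum_m c_m T(y_m) of the preprocessed
   measurements, and the spectral MSE is the sum of the coordinatewise MSEs.
   Perturbing the minimiser by s B in W0 or in a single W_m, with B a matrix unit
   times 1 or i, changes the MSE by a quadratic in s with no negative values, so
   the residual of Z is orthogonal in L^2 to 1 and to every T(y_m).  These normal
   equations give c0 = E Z - sum_m c_m E T(y_m) and T c = cov(T(y), Z); with
   T t = T(y) - E T(y) the estimate of Z is E Z + sum_m t_m cov(T(y_m), Z), the
   matching coordinate of K_x + sum_m t_m V_m. *)

From HB Require Import structures.
From mathcomp Require Import all_boot all_order all_algebra.
From mathcomp Require Import all_classical all_reals all_analysis.
From mathcomp Require Import complex measurable_realfun.
From mathcomp Require Import ring lra.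
Import Order.TTheory GRing.Theory Num.Theory.
Local Open Scope ring_scope.
Local Open Scope classical_set_scope.

Set Implicit Arguments. Unset Strict Implicit. Unset Printing Implicit Defensive.

Section ScalarCoordinates.
Variables (R : realType) (k : fld).
Implicit Types (a c : scal R k) (r : R).

Lemma sreB a c : sre (a - c) = sre a - sre c.
Proof. by case: k a c => [a c|[a1 a2] [c1 c2]]. Qed.

Lemma simB a c : sim (a - c) = sim a - sim c.
Proof. by case: k a c => [a c|[a1 a2] [c1 c2]] //=; rewrite subr0. Qed.

Lemma sreM a c : sre (a * c) = sre a * sre c - sim a * sim c.
Proof. by case: k a c => [a c|[a1 a2] [c1 c2]] //=; rewrite mulr0 subr0. Qed.

Lemma simM a c : sim (a * c) = sre a * sim c + sim a * sre c.
Proof. by case: k a c => [a c|[a1 a2] [c1 c2]] //=; rewrite mulr0 mul0r addr0. Qed.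

Lemma sre_conj a : sre (sconj a) = sre a.
Proof. by case: k a => [a|[a1 a2]]. Qed.

Lemma sim_conj a : sim (sconj a) = - sim a.
Proof. by case: k a => [a|[a1 a2]] //=; rewrite oppr0. Qed.

Lemma sre_sofR r : sre (sofR k r) = r.
Proof. by case: k. Qed.

Lemma sim_sofR r : sim (sofR k r) = 0.
Proof. by case: k. Qed.

Lemma sabs2_mulconj a c : sabs2 (a * sconj c) = sabs2 a * sabs2 c.
Proof. rewrite /sabs2 sreM simM sre_conj sim_conj; ring. Qed.

Lemma sabs2_ge0 a : 0 <= sabs2 a.
Proof. by rewrite addr_ge0 // sqr_ge0. Qed.

Definition scoord (b : bool) (a : scal R k) : R := if b then sim a else sre a.

Lemma scoordB b a c : scoord b (a - c) = scoord b a - scoord b c.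
Proof. by case: b; rewrite /= ?simB ?sreB. Qed.

Lemma scoord0 b : scoord b 0 = 0.
Proof. by rewrite -(subrr 0) scoordB subrr. Qed.

Lemma scoordD b a c : scoord b (a + c) = scoord b a + scoord b c.
Proof. by rewrite -{1}[c]opprK scoordB -[- c]sub0r scoordB scoord0 sub0r opprK. Qed.

Lemma scoord_sum b (I : Type) (r : seq I) (F : I -> scal R k) :
  scoord b (\sum_(i <- r) F i) = \sum_(i <- r) scoord b (F i).
Proof. exact: (big_morph _ (scoordD b) (scoord0 b)). Qed.

Lemma scoordZ b r a : scoord b (sofR k r * a) = r * scoord b a.
Proof.
by case: b; rewrite /= ?simM ?sreM sre_sofR sim_sofR mul0r ?addr0 ?subr0.
Qed.

Lemma scoord_inj a c : (forall b, scoord b a = scoord b c) -> a = c.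
Proof.
move=> /[dup] /(_ true) /= + /(_ false) /=.
by case: k a c => [a c|[a1 a2] [c1 c2]] //= -> ->.
Qed.

Lemma sqr_scoord_le b a : scoord b a ^+ 2 <= sabs2 a.
Proof. by case: b; rewrite /sabs2 /= (lerDr, lerDl) sqr_ge0. Qed.

Lemma sabs2E a : sabs2 a = \sum_b scoord b a ^+ 2.
Proof. by rewrite big_bool /sabs2 addrC. Qed.

(* The basis of H dual to [scoord]: 1 and i; [sunit true] is 0 when H = R. *)
Definition sunit b : scal R k := if b then smk k 0 1 else 1.

Lemma scoord_sunit b a : \sum_b' scoord b' a * scoord b' (sunit b) = scoord b a.
Proof.
rewrite big_bool /sunit /scoord /=.
by case: b; case: k a => [a|[a1 a2]] /=; rewrite ?mulr0 ?mulr1 ?add0r ?addr0.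
Qed.

End ScalarCoordinates.

Arguments sunit {R k}.

Section Matrices.
Variables (R : realType) (k : fld).
Implicit Types (s : R).

Definition frob_dot p q (A B : 'M[scal R k]_(p, q)) : R :=
  \sum_i \sum_j \sum_b scoord b (A i j) * scoord b (B i j).

Lemma frob2_dot p q (A : 'M[scal R k]_(p, q)) : frob2 A = frob_dot A A.
Proof.
apply: eq_bigr => i _; apply: eq_bigr => j _.
by rewrite sabs2E; under eq_bigr do rewrite expr2.
Qed.

Lemma frob2DZ p q (A B : 'M[scal R k]_(p, q)) s :
  frob2 (A + sofR k s *: B) = frob2 A + 2 * s * frob_dot A B + s ^+ 2 * frob2 B.
Proof.
rewrite /frob2 /frob_dot !big_distrr -!big_split /=; apply: eq_bigr => i _.
rewrite !big_distrr -!big_split /=; apply: eq_bigr => j _.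
by rewrite !mxE !sabs2E !big_bool !scoordD !scoordZ /=; ring.
Qed.

Lemma frob_dotZr p q (A B : 'M[scal R k]_(p, q)) s :
  frob_dot A (sofR k s *: B) = s * frob_dot A B.
Proof.
rewrite /frob_dot big_distrr; apply: eq_bigr => i _.
rewrite big_distrr; apply: eq_bigr => j _.
by rewrite big_distrr; apply: eq_bigr => b _; rewrite mxE scoordZ mulrCA.
Qed.

Lemma frob_dot_delta p q (A : 'M[scal R k]_(p, q)) b i j :
  frob_dot A (sunit b *: delta_mx i j) = scoord b (A i j).
Proof.
rewrite /frob_dot (bigD1 i) //= (bigD1 j) //= !mxE !eqxx mulr1 scoord_sunit.
rewrite !big1 ?addr0 // => [a /negbTE ai|j' /negbTE j'j]; last first.
  by apply: big1 => b' _; rewrite !mxE j'j andbF mulr0 scoord0 mulr0.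
by apply: big1 => j' _; apply: big1 => b' _; rewrite !mxE ai mulr0 scoord0 mulr0.
Qed.

Lemma frob2_outer n (v : 'cV[scal R k]_n) :
  frob2 (v *m ctr v) = (\sum_i sabs2 (v i 0)) ^+ 2.
Proof.
rewrite expr2 big_distrl; apply: eq_bigr => i _.
rewrite big_distrr; apply: eq_bigr => j _.
by rewrite !mxE big_ord1 !mxE sabs2_mulconj.
Qed.

Lemma sabs2_le_frob2 p q (A : 'M[scal R k]_(p, q)) i j : sabs2 (A i j) <= frob2 A.
Proof.
rewrite /frob2 (bigD1 i) //= (bigD1 j) //= -addrA lerDl.
by rewrite addr_ge0 // !sumr_ge0 // => *; rewrite ?sumr_ge0 // => *; apply: sabs2_ge0.
Qed.

Definition lin_est p q M (W0 : 'M[scal R k]_(p, q)) (W : 'I_M -> 'M[scal R k]_(p, q))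
  (gamma : 'I_M -> R) : 'M[scal R k]_(p, q) :=
  W0 + \sum_m sofR k (gamma m) *: W m.

Lemma lin_estDZ p q M (W0 B0 : 'M[scal R k]_(p, q)) (W B : 'I_M -> 'M[scal R k]_(p, q))
    gamma s :
  lin_est (W0 + sofR k s *: B0) (fun m => W m + sofR k s *: B m) gamma
  = lin_est W0 W gamma + sofR k s *: lin_est B0 B gamma.
Proof.
rewrite /lin_est scalerDr scaler_sumr.
under eq_bigr do rewrite scalerDr scalerA mulrC -scalerA.
by rewrite big_split /= addrACA.
Qed.

Lemma lin_est_cst p q M (B : 'M[scal R k]_(p, q)) gamma :
  lin_est B (fun _ : 'I_M => 0) gamma = B.
Proof. by rewrite /lin_est big1 ?addr0 // => m _; rewrite scaler0. Qed.

Lemma lin_est_delta p q M (B : 'M[scal R k]_(p, q)) (m0 : 'I_M) gamma :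
  lin_est 0 (fun m => if m == m0 then B else 0) gamma = sofR k (gamma m0) *: B.
Proof.
rewrite /lin_est add0r (bigD1 m0) //= eqxx big1 ?addr0 // => m /negbTE ->.
by rewrite scaler0.
Qed.

Lemma scoord_lin_est p q M (W0 : 'M[scal R k]_(p, q)) (W : 'I_M -> 'M[scal R k]_(p, q))
    gamma b i j :
  scoord b (lin_est W0 W gamma i j)
  = scoord b (W0 i j) + \sum_m scoord b (W m i j) * gamma m.
Proof.
rewrite !mxE scoordD summxE scoord_sum; congr (_ + _).
by apply: eq_bigr => m _; rewrite mxE scoordZ mulrC.
Qed.

End Matrices.

Section SquareIntegrable.
Context (R : realType) d (T : measurableType d) (P : probability T R).
Implicit Types (f g G : T -> R) (c : R).

Definition L1 f := P.-integrable setT (EFin \o f).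
Definition L2 f := measurable_fun setT f /\ (\int[P]_w (f w ^+ 2)%:E < +oo)%E.

Lemma L1_le f G : measurable_fun setT f -> (forall w, `|f w| <= G w) -> L1 G -> L1 f.
Proof.
move=> mf fG iG; apply: le_integrable iG => //; first exact/measurable_EFinP.
by move=> w _ /=; rewrite lee_fin (le_trans (fG w)) // ler_norm.
Qed.

Lemma L1D f g : L1 f -> L1 g -> L1 (fun w => f w + g w).
Proof. by move=> hf hg; apply: eq_integrable (integrableD measurableT hf hg). Qed.

Lemma L1Z c f : L1 f -> L1 (fun w => c * f w).
Proof. by move=> hf; apply: eq_integrable (integrableZl measurableT c hf). Qed.

Lemma L1_cst c : L1 (fun _ => c).
Proof. exact: finite_measure_integrable_cst. Qed.

Lemma L1_sum (I : Type) (s : seq I) (h : I -> T -> R) :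
  (forall i, L1 (h i)) -> L1 (fun w => \sum_(i <- s) h i w).
Proof.
move=> hh; elim: s => [|i s IH].
  by under eq_fun do rewrite big_nil; exact: L1_cst.
by under eq_fun do rewrite big_cons; exact: L1D.
Qed.

Lemma L2_sqr f : L2 f -> L1 (fun w => f w ^+ 2).
Proof.
move=> [mf fi]; apply/integrableP; split; first exact/measurable_EFinP/measurable_funX.
by under eq_integral do rewrite /= ger0_norm ?sqr_ge0//.
Qed.

Lemma L2_le f G : measurable_fun setT f -> (forall w, f w ^+ 2 <= G w) -> L1 G -> L2 f.
Proof.
move=> mf fG iG; split => //; apply: (integrable_lty measurableT).
by apply: L1_le iG => [|w]; [exact: measurable_funX | rewrite ger0_norm ?sqr_ge0].
Qed.

Lemma L2_cst c : L2 (fun _ => c).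
Proof. by apply: (L2_le (G := fun _ => c ^+ 2)) => //; exact: L1_cst. Qed.

Lemma L2D f g : L2 f -> L2 g -> L2 (fun w => f w + g w).
Proof.
move=> hf hg; apply: (L2_le (G := fun w => 2 * f w ^+ 2 + 2 * g w ^+ 2)).
- exact: measurable_funD hf.1 hg.1.
- by move=> w; have := sqr_ge0 (f w - g w); nra.
- by apply: L1D; apply: L1Z; exact: L2_sqr.
Qed.

Lemma L2Z c f : L2 f -> L2 (fun w => c * f w).
Proof.
move=> hf; apply: (L2_le (G := fun w => c ^+ 2 * f w ^+ 2)).
- exact: measurable_funM (measurable_cst _) hf.1.
- by move=> w; rewrite exprMn.
- by apply: L1Z; exact: L2_sqr.
Qed.

Lemma L2B f g : L2 f -> L2 g -> L2 (fun w => f w - g w).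
Proof.
move=> hf hg; under eq_fun do rewrite -mulN1r.
by apply: L2D => //; exact: L2Z.
Qed.

Lemma L2_sum (I : Type) (s : seq I) (h : I -> T -> R) :
  (forall i, L2 (h i)) -> L2 (fun w => \sum_(i <- s) h i w).
Proof.
move=> hh; elim: s => [|i s IH].
  by under eq_fun do rewrite big_nil; exact: L2_cst.
by under eq_fun do rewrite big_cons; exact: L2D.
Qed.

Lemma L2M f g : L2 f -> L2 g -> L1 (fun w => f w * g w).
Proof.
move=> hf hg; apply: (L1_le (G := fun w => f w ^+ 2 + g w ^+ 2)).
- exact: measurable_funM hf.1 hg.1.
- by move=> w; rewrite ler_norml; apply/andP; split; nra.
- by apply: L1D; exact: L2_sqr.
Qed.

Lemma L2_L1 f : L2 f -> L1 f.
Proof.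
by move=> hf; apply: eq_integrable (L2M hf (L2_cst 1)) => // w _ /=; rewrite mulr1.
Qed.

Lemma ExD f g : L1 f -> L1 g -> Ex P (fun w => f w + g w) = Ex P f + Ex P g.
Proof. exact: RintegralD. Qed.

Lemma ExB f g : L1 f -> L1 g -> Ex P (fun w => f w - g w) = Ex P f - Ex P g.
Proof. exact: RintegralB. Qed.

Lemma ExZ c f : L1 f -> Ex P (fun w => c * f w) = c * Ex P f.
Proof. exact: RintegralZl. Qed.

Lemma ExZr c f : L1 f -> Ex P (fun w => f w * c) = Ex P f * c.
Proof. exact: RintegralZr. Qed.

Lemma Ex_cst c : Ex P (fun _ => c) = c.
Proof. by rewrite /Ex integral_cst //= probability_setT mule1. Qed.

Lemma Ex_sum (I : Type) (s : seq I) (h : I -> T -> R) :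
  (forall i, L1 (h i)) -> Ex P (fun w => \sum_(i <- s) h i w) = \sum_(i <- s) Ex P (h i).
Proof.
move=> hh; elim: s => [|i s IH].
  by under eq_fun do rewrite big_nil; rewrite big_nil Ex_cst.
under eq_fun do rewrite big_cons.
by rewrite big_cons ExD ?IH //; exact: L1_sum.
Qed.

Lemma integral_Ex f : L1 f -> (\int[P]_w (f w)%:E)%E = (Ex P f)%:E.
Proof. by move=> hf; rewrite /Ex fineK //; exact: integrable_fin_num. Qed.

End SquareIntegrable.

Section AffineEstimator.
Context (R : realType) d (T : measurableType d) (P : probability T R).

Definition cov (f g : T -> R) := Ex P (fun w => (f w - Ex P f) * (g w - Ex P g)).

Lemma covC f g : cov f g = cov g f.
Proof. by rewrite /cov; congr Ex; apply: funext => w; rewrite mulrC. Qed.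

Variables (M : nat) (g : 'I_M -> T -> R) (Z : T -> R) (c0 : R) (c : 'I_M -> R).
Hypotheses (Lg : forall m, L2 P (g m)) (LZ : L2 P Z).
Let r w := c0 + \sum_m c m * g m w - Z w.
Hypotheses (r_mean0 : Ex P r = 0) (r_orth : forall m, Ex P (fun w => r w * g m w) = 0).

Let Lr : L2 P r.
Proof.
by apply: L2B => //; apply: L2D; [exact: L2_cst | apply: L2_sum => m; exact: L2Z].
Qed.

Let L1cg m : L1 P (fun w => c m * g m w).
Proof. exact/L2_L1/L2Z. Qed.

Let Ex_r : Ex P r = c0 + \sum_m c m * Ex P (g m) - Ex P Z.
Proof.
rewrite /r ExB ?ExD ?Ex_cst ?Ex_sum //.
- by congr (_ + _ - _); apply: eq_bigr => m _; rewrite ExZ //; exact: L2_L1.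
- exact: L1_cst.
- exact: L1_sum.
- by apply: L1D; [exact: L1_cst | exact: L1_sum].
- exact: L2_L1.
Qed.

Lemma orth_intercept : c0 = Ex P Z - \sum_m c m * Ex P (g m).
Proof. by move: r_mean0; rewrite Ex_r; lra. Qed.

Lemma orth_normal_eq m' : \sum_m c m * cov (g m) (g m') = cov (g m') Z.
Proof.
have Lgc m : L2 P (fun w => g m w - Ex P (g m)) by apply: L2B => //; exact: L2_cst.
have LZc : L2 P (fun w => Z w - Ex P Z) by apply: L2B => //; exact: L2_cst.
have r_centered w : r w = \sum_m c m * (g m w - Ex P (g m)) - (Z w - Ex P Z).
  rewrite /r orth_intercept; under [in RHS]eq_bigr do rewrite mulrBr.
  by rewrite sumrB; ring.
have : Ex P (fun w => r w * (g m' w - Ex P (g m'))) = 0.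
  under eq_fun do rewrite mulrBr.
  rewrite ExB ?ExZr ?r_orth ?r_mean0 ?mul0r ?subr0 //; [exact: L2_L1 | exact: L2M | ].
  by apply: L2M => //; exact: L2_cst.
under eq_fun do rewrite r_centered mulrBl big_distrl /=.
have L1c m : L1 P (fun w => c m * (g m w - Ex P (g m)) * (g m' w - Ex P (g m'))).
  by apply: L2M => //; exact: L2Z.
rewrite ExB ?Ex_sum //; [| exact: L1_sum | exact: L2M].
move/eqP; rewrite subr_eq0 covC /cov => /eqP <-.
apply: eq_bigr => m _; rewrite -ExZ; last exact: L2M.
by congr Ex; apply: funext => w; rewrite mulrA.
Qed.

Lemma orth_affine_estimatorE (gamma tau : 'I_M -> R) :
  (forall m, \sum_m' cov (g m) (g m') * tau m' = gamma m - Ex P (g m)) ->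
  c0 + \sum_m c m * gamma m = Ex P Z + \sum_m tau m * cov (g m) Z.
Proof.
move=> htau; rewrite orth_intercept -addrA; congr (_ + _).
rewrite addrC -sumrB.
under eq_bigr do rewrite -mulrBr -htau big_distrr /=.
rewrite exchange_big /=; apply: eq_bigr => m' _.
by rewrite -orth_normal_eq mulr_sumr; apply: eq_bigr => m _; ring.
Qed.

End AffineEstimator.

Section MeasurableScalars.
Context (R : realType) (k : fld) d (T : measurableType d).
Implicit Types (F G : T -> scal R k).

Lemma smeasP F : smeas F <-> forall b, measurable_fun setT (fun w => scoord b (F w)).
Proof. by split => [[mre mim] []|h] //; split; [exact: (h false) | exact: (h true)]. Qed.

Lemma smeas_cst (a : scal R k) : smeas (fun _ : T => a).
Proof. by split; exact: measurable_cst. Qed.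

Lemma smeasD F G : smeas F -> smeas G -> smeas (fun w => F w + G w).
Proof.
move=> /smeasP mF /smeasP mG; apply/smeasP => b.
by under eq_fun do rewrite scoordD; exact: measurable_funD.
Qed.

Lemma smeasM F G : smeas F -> smeas G -> smeas (fun w => F w * G w).
Proof.
move=> [mF1 mF2] [mG1 mG2]; split.
  by under eq_fun do rewrite sreM; apply: measurable_funB; exact: measurable_funM.
by under eq_fun do rewrite simM; apply: measurable_funD; exact: measurable_funM.
Qed.

Lemma smeas_conj F : smeas F -> smeas (fun w => sconj (F w)).
Proof.
move=> [mF1 mF2]; split; first by under eq_fun do rewrite sre_conj.
by under eq_fun do rewrite sim_conj; exact: measurableT_comp.
Qed.

Lemma smeas_sum (I : Type) (s : seq I) (F : I -> T -> scal R k) :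
  (forall i, smeas (F i)) -> smeas (fun w => \sum_(i <- s) F i w).
Proof.
move=> mF; apply/smeasP => b; under eq_fun do rewrite scoord_sum.
by apply: measurable_sum => i; move/smeasP: (mF i); apply.
Qed.

Lemma smeas_mulmx p q (A : 'M[scal R k]_(p, q)) (x : T -> 'cV[scal R k]_q) i :
  (forall j, smeas (fun w => x w j 0)) -> smeas (fun w => (A *m x w) i 0).
Proof.
move=> mx; under eq_fun do rewrite mxE.
by apply: smeas_sum => j; apply: smeasM => //; exact: smeas_cst.
Qed.

Lemma smeasf_comp (f : scal R k -> R) F :
  smeasf f -> smeas F -> measurable_fun setT (fun w => f (F w)).
Proof.
case: k f F => f F /= mf [mre mim]; first exact: measurableT_comp mf mre.
have -> : (fun w => f (F w)) =
    (fun p : R * R => f (Complex p.1 p.2))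
    \o (fun w => (complex.Re (F w), complex.Im (F w))).
  by apply: funext => w /=; case: (F w).
exact: measurableT_comp mf (measurable_fun_pair mre mim).
Qed.

End MeasurableScalars.

Lemma quad_ge0_lin0 (R : realFieldType) (a c : R) :
  (forall s, 0 <= 2 * s * a + s ^+ 2 * c) -> a = 0.
Proof.
move=> h; have [c_le0|c_gt0] := leP c 0; first by have := h (- a); nra.
have ha : a = a / c * c by rewrite divfK ?gt_eqF.
have := h (- (a / c)); rewrite {2}ha; set u := a / c => hu.
have u0 : u = 0.
  apply/eqP; rewrite -sqrf_eq0 eq_le sqr_ge0 andbT -(ler_pM2r c_gt0) mul0r; nra.
by rewrite ha -/u u0 mul0r.
Qed.

Section SquareIntegrableMatrices.
Context (R : realType) (k : fld) d (T : measurableType d) (P : probability T R).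

Definition L2mx p q (F : T -> 'M[scal R k]_(p, q)) :=
  forall b i j, L2 P (fun w => scoord b (F w i j)).

Lemma scoord_Emx p q (F : T -> 'M[scal R k]_(p, q)) b i j :
  scoord b (Emx P F i j) = Ex P (fun w => scoord b (F w i j)).
Proof. by rewrite mxE /scoord; case: b; case: k F => F //=; rewrite Ex_cst. Qed.

Lemma L2mx_outer n (x : T -> 'cV[scal R k]_n) :
  (forall i, smeas (fun w => x w i 0)) ->
  (\int[P]_w ((\sum_i sabs2 (x w i 0)) ^+ 2)%:E < +oo)%E ->
  L2mx (fun w => x w *m ctr (x w)).
Proof.
move=> mx hx4 b i j.
apply: (L2_le (G := fun w => (\sum_i sabs2 (x w i 0)) ^+ 2)).
- have : smeas (fun w => (x w *m ctr (x w)) i j).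
    under eq_fun do rewrite !mxE big_ord1 !mxE.
    by apply: smeasM => //; exact: smeas_conj.
  by move/smeasP; apply.
- by move=> w; rewrite -frob2_outer (le_trans (sqr_scoord_le _ _)) ?sabs2_le_frob2.
- apply/integrableP; split.
    apply/measurable_EFinP; apply: measurable_funX; apply: measurable_sum => l.
    by case: (mx l) => mre mim; apply: measurable_funD; exact: measurable_funX.
  by under eq_integral do rewrite /= ger0_norm ?sqr_ge0//.
Qed.

Variables (p q : nat).
Implicit Types (F G : T -> 'M[scal R k]_(p, q)).

Lemma L2mx_cst (B : 'M[scal R k]_(p, q)) : L2mx (fun _ => B).
Proof. by move=> b i j; exact: L2_cst. Qed.

Lemma L2mx_scale (e : T -> R) (B : 'M[scal R k]_(p, q)) :
  L2 P e -> L2mx (fun w => sofR k (e w) *: B).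
Proof.
move=> Le b i j; under eq_fun do rewrite mxE scoordZ mulrC.
exact: L2Z.
Qed.

Lemma L2mxD F G : L2mx F -> L2mx G -> L2mx (fun w => F w + G w).
Proof. by move=> LF LG b i j; under eq_fun do rewrite mxE scoordD; exact: L2D. Qed.

Lemma L2mxB F G : L2mx F -> L2mx G -> L2mx (fun w => F w - G w).
Proof. by move=> LF LG b i j; under eq_fun do rewrite !mxE scoordB; exact: L2B. Qed.

Lemma L2mx_sum (I : Type) (s : seq I) (F : I -> T -> 'M[scal R k]_(p, q)) :
  (forall l, L2mx (F l)) -> L2mx (fun w => \sum_(l <- s) F l w).
Proof.
move=> LF b i j; under eq_fun do rewrite summxE scoord_sum.
by apply: L2_sum => l; exact: LF.
Qed.

Lemma L1_frob_dot F G : L2mx F -> L2mx G -> L1 P (fun w => frob_dot (F w) (G w)).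
Proof. by move=> LF LG; do 3!apply: L1_sum => ?; exact: L2M. Qed.

Lemma Ex_frob_dot_eq0 F G :
  L2mx F -> L2mx G ->
  (forall s, (\int[P]_w (frob2 (F w))%:E
              <= \int[P]_w (frob2 (F w + sofR k s *: G w))%:E)%E) ->
  Ex P (fun w => frob_dot (F w) (G w)) = 0.
Proof.
move=> LF LG hmin.
have L1FG := L1_frob_dot LF LG.
have L1F : L1 P (fun w => frob2 (F w)).
  by under eq_fun do rewrite frob2_dot; exact: L1_frob_dot.
have L1G : L1 P (fun w => frob2 (G w)).
  by under eq_fun do rewrite frob2_dot; exact: L1_frob_dot.
apply: (@quad_ge0_lin0 _ _ (Ex P (fun w => frob2 (G w)))) => s.
have := hmin s; under [X in (_ <= X)%E]eq_integral do rewrite frob2DZ.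
rewrite !integral_Ex ?lee_fin; last 2 first.
- by apply: L1D; [apply: L1D => // | ]; exact: L1Z.
- exact: L1F.
rewrite ExD ?ExD ?ExZ //; [lra | exact: L1Z | | exact: L1Z].
by apply: L1D => //; exact: L1Z.
Qed.

End SquareIntegrableMatrices.

Section OptimalLinearEstimator.
Context (R : realType) (k : fld) d (T : measurableType d) (P : probability T R).
Variables (N M : nat) (g : 'I_M -> T -> R) (X : T -> 'M[scal R k]_N).
Hypotheses (Lg : forall m, L2 P (g m)) (LX : L2mx P X).

Definition mse (W0 : 'M[scal R k]_N) (W : 'I_M -> 'M[scal R k]_N) : \bar R :=
  \int[P]_w (frob2 (lin_est W0 W (g^~ w) - X w))%:E.

Lemma L2mx_lin_est (W0 : 'M[scal R k]_N) (W : 'I_M -> 'M[scal R k]_N) :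
  L2mx P (fun w => lin_est W0 W (g^~ w)).
Proof.
apply: L2mxD; first exact: L2mx_cst.
by apply: L2mx_sum => m; exact: L2mx_scale.
Qed.

Variables (W0 : 'M[scal R k]_N) (W : 'I_M -> 'M[scal R k]_N).
Hypothesis W_opt : forall W0' W', (mse W0 W <= mse W0' W')%E.

Let res w := lin_est W0 W (g^~ w) - X w.

Let Ex_res_dot_eq0 (B0 : 'M[scal R k]_N) (B : 'I_M -> 'M[scal R k]_N) :
  Ex P (fun w => frob_dot (res w) (lin_est B0 B (g^~ w))) = 0.
Proof.
apply: Ex_frob_dot_eq0; [exact/L2mxB/LX/L2mx_lin_est | exact: L2mx_lin_est | move=> s].
have := W_opt (W0 + sofR k s *: B0) (fun m => W m + sofR k s *: B m).
by under [X in (_ <= X)%E]eq_integral do rewrite lin_estDZ addrAC.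
Qed.

Lemma scoord_lin_est_opt b i j (gamma tau : 'I_M -> R) :
  (forall m, \sum_m' cov P (g m) (g m') * tau m' = gamma m - Ex P (g m)) ->
  scoord b (lin_est W0 W gamma i j)
  = Ex P (fun w => scoord b (X w i j))
    + \sum_m tau m * cov P (g m) (fun w => scoord b (X w i j)).
Proof.
move=> htau; rewrite scoord_lin_est.
have res_coord w : frob_dot (res w) (sunit b *: delta_mx i j)
    = scoord b (W0 i j) + \sum_m scoord b (W m i j) * g m w - scoord b (X w i j).
  rewrite frob_dot_delta.
  have -> : res w i j = lin_est W0 W (g^~ w) i j - X w i j by rewrite !mxE.
  by rewrite scoordB scoord_lin_est.
apply: (orth_affine_estimatorE Lg (LX b i j)) htau.
- have := Ex_res_dot_eq0 (sunit b *: delta_mx i j) (fun _ => 0).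
  by under eq_fun do rewrite lin_est_cst res_coord.
- move=> m0.
  have := Ex_res_dot_eq0 0 (fun m => if m == m0 then sunit b *: delta_mx i j else 0).
  by under eq_fun do rewrite lin_est_delta frob_dotZr res_coord mulrC.
Qed.

Lemma lin_est_opt (gamma tau : 'I_M -> R) :
  (forall m, \sum_m' cov P (g m) (g m') * tau m' = gamma m - Ex P (g m)) ->
  lin_est W0 W gamma = Emx P X + \sum_m sofR k (tau m) *:
    Emx P (fun w => sofR k (g m w - Ex P (g m)) *: (X w - Emx P X)).
Proof.
move=> htau; apply/matrixP => i j; apply: scoord_inj => b.
rewrite (scoord_lin_est_opt _ _ _ htau) mxE scoordD scoord_Emx summxE scoord_sum.
congr (_ + _); apply: eq_bigr => m _; rewrite mxE scoordZ scoord_Emx; congr (_ * _).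
rewrite /cov; congr Ex; apply: funext => w; rewrite mxE scoordZ.
have -> : (X w - Emx P X) i j = X w i j - Emx P X i j by rewrite !mxE.
by rewrite scoordB scoord_Emx.
Qed.

End OptimalLinearEstimator.

Theorem theorem1
  (R : realType) (k : fld) (d : measure_display) (Omega : measurableType d)
  (P : probability Omega R) (M N : nat)
  (A : 'M[scal R k]_(M, N))
  (x : Omega -> 'cV[scal R k]_N) (ez : Omega -> 'cV[scal R k]_M)
  (ey : Omega -> 'cV[R]_M)
  (f : scal R k -> R) (Tf : R -> R)
  (y : Omega -> 'cV[R]_M)
  (Tbar : 'cV[R]_M) (Kx : 'M[scal R k]_N) (Tcov : 'M[R]_M)
  (t : Omega -> 'cV[R]_M) (V : 'I_M -> 'M[scal R k]_N)
  (W0 : 'M[scal R k]_N) (W : 'I_M -> 'M[scal R k]_N) :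
  (* x, e^z, e^y are random vectors *)
  (forall i, smeas (fun w => x w i 0)) ->
  (forall m, smeas (fun w => ez w m 0)) ->
  (forall m, measurable_fun setT (fun w => ey w m 0)) ->
  (* f and the preprocessing function are measurable *)
  smeasf f -> measurable_fun [set: R] Tf ->
  (* measurement model y = f(Ax + e^z) + e^y *)
  (forall w, y w = \col_m (f ((A *m x w + ez w) m 0) + ey w m 0)) ->
  (* moment assumptions *)
  (forall m, (\int[P]_w ((Tf (y w m 0)) ^+ 2)%:E < +oo)%E) ->
  (\int[P]_w ((\sum_i sabs2 (x w i 0)) ^+ 2)%:E < +oo)%E ->
  (* definitions of Tbar, K_x, T, t, V_m *)
  Tbar = \col_m Ex P (fun w => Tf (y w m 0)) ->
  Kx = Emx P (fun w => x w *m ctr (x w)) ->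
  Tcov = \matrix_(m, m') Ex P (fun w => (Tf (y w m 0) - Tbar m 0)
                                       * (Tf (y w m' 0) - Tbar m' 0)) ->
  \rank Tcov = M ->
  (forall w, Tcov *m t w = \col_m (Tf (y w m 0) - Tbar m 0)) ->
  (forall m, V m = Emx P (fun w =>
      sofR k (Tf (y w m 0) - Tbar m 0) *: (x w *m ctr (x w) - Kx))) ->
  (* (W0, W) minimizes the spectral MSE *)
  (forall (W0' : 'M[scal R k]_N) (W' : 'I_M -> 'M[scal R k]_N),
     (\int[P]_w (frob2 (W0 + \sum_m sofR k (Tf (y w m 0)) *: W m
                       - x w *m ctr (x w)))%:E
      <= \int[P]_w (frob2 (W0' + \sum_m sofR k (Tf (y w m 0)) *: W' m
                       - x w *m ctr (x w)))%:E)%E) ->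
  (* then D_y = K_x + sum_m t_m V_m *)
  forall w, W0 + \sum_m sofR k (Tf (y w m 0)) *: W m
            = Kx + \sum_m sofR k (t w m 0) *: V m.
Proof.
move=> mx mez mey mf mTf hy hT2 hx4 hTbar hKx hTcov _ ht hV hmin w.
pose g m v := Tf (y v m 0).
have Lg m : L2 P (g m).
  split; last exact: hT2.
  apply: measurableT_comp mTf _; under eq_fun do rewrite hy mxE.
  apply: measurable_funD (mey m); apply: smeasf_comp mf _.
  by under eq_fun do rewrite mxE; apply: smeasD (mez m); exact: smeas_mulmx.
subst Tbar Kx Tcov.
under [X in _ = _ + X]eq_bigr do rewrite hV mxE.
apply: (lin_est_opt Lg (L2mx_outer mx hx4) hmin (gamma := fun m => Tf (y w m 0))) => m.
have := congr1 (fun B : 'cV[R]_M => B m 0) (ht w); rewrite !mxE => <-.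
by apply: eq_bigr => m' _; rewrite !mxE.
Qed.
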